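(* Fix $1\ge \rho_+>\rho_-\ge 0$. There exist constants $c<\infty$ and $b>0$, independent of $N$, such that for every positive integer $N$, every probability measure $\mu_N$ on $\{0,1\}^{[-N,N]}$ and every $t>0$, $$\|\mu_N S_t-\mu^{\rm st}_N\|\le c\,N\,e^{-bN^{-2}t}.$$
   Context: For a positive integer $N$, consider the continuous-time Markov process on $\{0,1\}^{[-N,N]}$ (with $[-N,N]$ the integers from $-N$ to $N$) with generator $L=L_0+L'$, where for $f:\{0,1\}^{[-N,N]}\to\mathbb R$, $$L_0 f(\eta)=\frac12\sum_{x=-N}^{N-1}[f(\eta^{(x,x+1)})-f(\eta)],$$ $\eta^{(x,x+1)}$ being $\eta$ with the values at $x$ and $x+1$ exchanged, and $$L'f(\eta)=\rho_+[f(\eta^{(+,N)})-f(\eta)]+(1-\rho_+)[f(\eta^{(-,N)})-f(\eta)]+\rho_-[f(\eta^{(+,-N)})-f(\eta)]+(1-\rho_-)[f(\eta^{(-,-N)})-f(\eta)],$$ where $\eta^{(+,x)}$ (resp. $\eta^{(-,x)}$) equals $\eta$ except that its value at $x$ is set to $1$ (resp. $0$). This process has a unique stationary probability measure $\mu^{\rm st}_N$. For a probability measure $\mu_N$, $\mu_NS_t$ denotes the law at time $t$ of the process started with law $\mu_N$. For a signed measure $\lambda$ on $\{0,1\}^{[-N,N]}$, $\|\lambda\|=\sum_\eta|\lambda(\eta)|$. *)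

From Stdlib Require Import Reals List Arith Bool.
Import ListNotations.
Open Scope R_scope.

(* A configuration eta in {0,1}^{[-N,N]} is encoded as a list of booleans of
   length 2N+1; site x in [-N,N] corresponds to index x+N in [0,2N]
   (true = 1, false = 0). *)
Definition config := list bool.

Fixpoint configs (n : nat) : list config :=
  match n with
  | O => [ [] ]
  | S m => flat_map (fun l => [false :: l; true :: l]) (configs m)
  end.

Definition sumc (n : nat) (f : config -> R) : R :=
  fold_right Rplus 0 (map f (configs n)).

Definition get (eta : config) (i : nat) : bool := nth i eta false.

Definition setc (eta : config) (i : nat) (b : bool) : config :=
  map (fun j => if Nat.eqb j i then b else get eta j) (seq 0 (length eta)).

Definition swapc (eta : config) (i : nat) : config :=
  map (fun j => if Nat.eqb j i then get eta (S i)
                else if Nat.eqb j (S i) then get eta i else get eta j)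
      (seq 0 (length eta)).

Definition gen (N : nat) (rp rm : R) (f : config -> R) (eta : config) : R :=
  / 2 * fold_right Rplus 0
          (map (fun i => f (swapc eta i) - f eta) (seq 0 (2 * N)))
  + rp * (f (setc eta (2 * N) true) - f eta)
  + (1 - rp) * (f (setc eta (2 * N) false) - f eta)
  + rm * (f (setc eta 0 true) - f eta)
  + (1 - rm) * (f (setc eta 0 false) - f eta).

Definition indic (eta : config) : config -> R :=
  fun zeta => if list_eq_dec bool_dec zeta eta then 1 else 0.

Definition genM (N : nat) (rp rm : R) (mu : config -> R) : config -> R :=
  fun eta => sumc (2 * N + 1) (fun zeta => mu zeta * gen N rp rm (indic eta) zeta).

Definition is_prob (N : nat) (mu : config -> R) : Prop :=
  (forall eta, In eta (configs (2 * N + 1)) -> 0 <= mu eta) /\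
  sumc (2 * N + 1) mu = 1.

(* nu = mu S_t = mu e^{tL}, defined entrywise by the exponential series *)
Definition is_law_at (N : nat) (rp rm : R) (mu : config -> R) (t : R)
    (nu : config -> R) : Prop :=
  forall eta, In eta (configs (2 * N + 1)) ->
    infinite_sum (fun k => t ^ k / INR (fact k) * Nat.iter k (genM N rp rm) mu eta)
                 (nu eta).

Definition is_stationary (N : nat) (rp rm : R) (mu : config -> R) : Prop :=
  is_prob N mu /\
  forall eta, In eta (configs (2 * N + 1)) -> genM N rp rm mu eta = 0.

Definition tvnorm (N : nat) (lam : config -> R) : R :=
  sumc (2 * N + 1) (fun eta => Rabs (lam eta)).

From Stdlib Require Import Reals List Arith Bool Lia Lra.
From Coquelicot Require Import Coquelicot.
Import ListNotations.
Open Scope R_scope.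

(* Let s be the sign of nu - mst, so that ||nu - mst|| = <nu, s> - <mst, s>.
   1. Duality: mu L^k pairs with f as mu pairs with L^k f, so
      <nu, f> = sum_k t^k/k! <mu, L^k f>.
   2. Uniformization: all jump rates sum to at most qq = N + 2, so Q = I + L/qq is a
      Markov (sup-norm contracting) operator, and by a Cauchy product
      e^{qq t} <nu, f> = sum_m (qq t)^m/m! <mu, Q^m f>; the stationary mst is Q-invariant.
   3. Coupling: if g flips by at most d x at site x, then Q g flips by at most (Kop d) x,
      where Kop moves discrepancies along bonds and lets each reservoir erase them.
      The concave profile hh x = (x+1)(2N+1-x) satisfies Kop hh <= theta hh with
      1 - theta = 1 / (qq (N+1)^2), so the oscillation of Q^m s is O(N^3 theta^m).
   4. Comparing the series of step 2 with exponential series gives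
      ||nu - mst|| <= min(2, O(N^3) e^{-t/(N+1)^2}), which is <= 8 N e^{-t/(12 N^2)}. *)

Definition lsum {A} (l : list A) (f : A -> R) : R := fold_right Rplus 0 (map f l).

Lemma lsum_nil {A} (f : A -> R) : lsum [] f = 0.
Proof. reflexivity. Qed.

Lemma lsum_cons {A} a l (f : A -> R) : lsum (a :: l) f = f a + lsum l f.
Proof. reflexivity. Qed.

Lemma lsum_app {A} l1 l2 (f : A -> R) : lsum (l1 ++ l2) f = lsum l1 f + lsum l2 f.
Proof.
  induction l1 as [|a l1 IH]; [unfold lsum; simpl; lra|].
  simpl. rewrite !lsum_cons, IH; lra.
Qed.

Lemma lsum_ext_in {A} l (f g : A -> R) :
  (forall a, In a l -> f a = g a) -> lsum l f = lsum l g.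
Proof.
  induction l as [|a l IH]; intros H; [reflexivity|].
  rewrite !lsum_cons, H, IH; [reflexivity | intros; apply H | ]; simpl; auto.
Qed.

Lemma lsum_ext {A} l (f g : A -> R) : (forall a, f a = g a) -> lsum l f = lsum l g.
Proof. intros; apply lsum_ext_in; auto. Qed.

Lemma lsum_plus {A} l (f g : A -> R) : lsum l (fun a => f a + g a) = lsum l f + lsum l g.
Proof. induction l as [|a l IH]; [unfold lsum; simpl; lra|]. rewrite !lsum_cons, IH; lra. Qed.

Lemma lsum_minus {A} l (f g : A -> R) : lsum l (fun a => f a - g a) = lsum l f - lsum l g.
Proof. induction l as [|a l IH]; [unfold lsum; simpl; lra|]. rewrite !lsum_cons, IH; lra. Qed.

Lemma lsum_scal {A} l c (f : A -> R) : lsum l (fun a => c * f a) = c * lsum l f.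
Proof. induction l as [|a l IH]; [unfold lsum; simpl; lra|]. rewrite !lsum_cons, IH; lra. Qed.

Lemma lsum_const {A} l c : lsum l (fun _ : A => c) = INR (length l) * c.
Proof.
  induction l as [|a l IH]; [unfold lsum; simpl; lra|].
  rewrite lsum_cons, IH. cbn [length]. rewrite S_INR; lra.
Qed.

Lemma lsum_le {A} l (f g : A -> R) :
  (forall a, In a l -> f a <= g a) -> lsum l f <= lsum l g.
Proof.
  induction l as [|a l IH]; intros H; [unfold lsum; simpl; lra|].
  rewrite !lsum_cons.
  apply Rplus_le_compat; [apply H; now left | apply IH; intros; apply H; now right].
Qed.

Lemma lsum_abs {A} l (f : A -> R) : Rabs (lsum l f) <= lsum l (fun a => Rabs (f a)).
Proof.
  induction l as [|a l IH]; [unfold lsum; simpl; rewrite Rabs_R0; lra|].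
  rewrite !lsum_cons. eapply Rle_trans; [apply Rabs_triang | lra].
Qed.

Lemma lsum_abs_bound {A} l (f : A -> R) M :
  (forall a, In a l -> Rabs (f a) <= M) -> Rabs (lsum l f) <= INR (length l) * M.
Proof.
  intros H. rewrite <- lsum_const. eapply Rle_trans; [apply lsum_abs | now apply lsum_le].
Qed.

Lemma lsum_swap {A B} (l1 : list A) (l2 : list B) (F : A -> B -> R) :
  lsum l1 (fun a => lsum l2 (F a)) = lsum l2 (fun b => lsum l1 (fun a => F a b)).
Proof.
  induction l1 as [|a l1 IH].
  - transitivity 0; [reflexivity|].
    rewrite (lsum_ext l2 _ (fun _ => 0)), lsum_const by reflexivity. lra.
  - rewrite lsum_cons, IH, <- lsum_plus. apply lsum_ext. intros; now rewrite lsum_cons.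
Qed.

Lemma lsum_sumf {A} l (G : nat -> A -> R) n :
  lsum l (fun a => sum_f_R0 (fun k => G k a) n) = sum_f_R0 (fun k => lsum l (G k)) n.
Proof. induction n; simpl; [reflexivity|]. now rewrite lsum_plus, IHn. Qed.
Lemma configs_len n l : In l (configs n) <-> length l = n.
Proof.
  revert l; induction n as [|n IH]; intros l; simpl.
  - split; [intros [<-|[]]; reflexivity | destruct l; simpl; auto; discriminate].
  - rewrite in_flat_map. split.
    + intros [l' [Hl' [<-|[<-|[]]]]]; apply IH in Hl'; simpl; auto.
    + destruct l as [|b l]; simpl; [discriminate|]. intros [= Hl].
      exists l. split; [now apply IH | destruct b; simpl; auto].
Qed.

Lemma sumc_S m F : sumc (S m) F = sumc m (fun l => F (false :: l) + F (true :: l)).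
Proof.
  unfold sumc. simpl. induction (configs m) as [|l ls IH]; simpl; [reflexivity|].
  rewrite IH. lra.
Qed.

Lemma sumc_indic n (c : config -> R) w : length w = n ->
  sumc n (fun e => c e * indic e w) = c w.
Proof.
  revert c w; induction n as [|n IH]; intros c w Hw.
  - destruct w; [|discriminate]. unfold sumc, indic; simpl.
    destruct (list_eq_dec bool_dec [] []); [lra | congruence].
  - destruct w as [|b w]; [discriminate|]. injection Hw as Hw.
    rewrite sumc_S, <- (IH (fun l => c (b :: l)) w Hw).
    unfold sumc. f_equal. apply map_ext. intros l. unfold indic.
    destruct b; repeat destruct list_eq_dec; try congruence; lra.
Qed.

Open Scope nat_scope.

Lemma nth_map_seq (f : nat -> bool) n j :
  nth j (map f (seq 0 n)) false = if j <? n then f j else false.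
Proof.
  destruct (Nat.ltb_spec j n).
  - rewrite nth_indep with (d' := f 0) by (rewrite length_map, length_seq; auto).
    rewrite map_nth, seq_nth by auto. reflexivity.
  - apply nth_overflow. rewrite length_map, length_seq; auto.
Qed.

Lemma len_setc z i b : length (setc z i b) = length z.
Proof. unfold setc. now rewrite length_map, length_seq. Qed.

Lemma len_swapc z i : length (swapc z i) = length z.
Proof. unfold swapc. now rewrite length_map, length_seq. Qed.

Lemma get_setc z i b j :
  get (setc z i b) j = if j <? length z then (if j =? i then b else get z j) else false.
Proof. apply nth_map_seq. Qed.

Lemma get_swapc z i j : get (swapc z i) j =
  if j <? length z then
    (if j =? i then get z (S i) else if j =? S i then get z i else get z j)
  else false.
Proof. apply nth_map_seq. Qed.

Lemma config_ext (a b : config) :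
  length a = length b -> (forall j, j < length a -> get a j = get b j) -> a = b.
Proof. intros; apply nth_ext with false false; auto. Qed.

Ltac index_cases :=
  repeat (match goal with
  | |- context [?a =? ?b] => destruct (Nat.eqb_spec a b)
  | |- context [?a <? ?b] => destruct (Nat.ltb_spec a b)
  | |- context [?a <=? ?b] => destruct (Nat.leb_spec a b)
  end; cbv iota beta); subst; try lia.

Ltac config_eq :=
  apply config_ext; [now repeat (rewrite len_setc || rewrite len_swapc)|];
  let j := fresh "j" in let Hj := fresh "Hj" in
  intros j Hj; repeat (rewrite len_setc in Hj || rewrite len_swapc in Hj);
  repeat (rewrite get_setc || rewrite get_swapc || rewrite len_setc || rewrite len_swapc);
  index_cases; auto.

Definition tau (i x : nat) : nat := if x =? i then S i else if x =? S i then i else x.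

Lemma tau_lt i x m : S i < m -> x < m -> tau i x < m.
Proof. unfold tau. intros. index_cases. Qed.

Lemma swap_set z x c i : S i < length z -> x < length z ->
  swapc (setc z x c) i = setc (swapc z i) (tau i x) c.
Proof. unfold tau. intros. destruct (Nat.eqb_spec x i), (Nat.eqb_spec x (S i)); config_eq. Qed.

Lemma set_set_comm z x y c c' : x <> y ->
  setc (setc z x c) y c' = setc (setc z y c') x c.
Proof. intros. config_eq. Qed.

Lemma set_set_same z x c c' : setc (setc z x c) x c' = setc z x c'.
Proof. config_eq. Qed.

Lemma set_get z x : x < length z -> setc z x (get z x) = z.
Proof. intros. config_eq. Qed.

Close Scope nat_scope.

Lemma sumc_lsum n F : sumc n F = lsum (configs n) F.
Proof. reflexivity. Qed.

Definition pairing (n : nat) (mu f : config -> R) : R := sumc n (fun z => mu z * f z).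

Section Generator.
Variables (N : nat) (rp rm : R).
Let n := (2 * N + 1)%nat.

Lemma gen_ext_len f g z : (forall w, length w = length z -> f w = g w) ->
  gen N rp rm f z = gen N rp rm g z.
Proof.
  intros H. unfold gen.
  rewrite (map_ext (fun i => f (swapc z i) - f z) (fun i => g (swapc z i) - g z))
    by (intros i; rewrite !H by (rewrite ?len_swapc; auto); reflexivity).
  rewrite !H by (rewrite ?len_setc; auto). reflexivity.
Qed.

Lemma gen_plus f g z :
  gen N rp rm (fun w => f w + g w) z = gen N rp rm f z + gen N rp rm g z.
Proof.
  unfold gen. fold (lsum (seq 0 (2 * N)) (fun i => f (swapc z i) + g (swapc z i) - (f z + g z))).
  fold (lsum (seq 0 (2 * N)) (fun i => f (swapc z i) - f z)).
  fold (lsum (seq 0 (2 * N)) (fun i => g (swapc z i) - g z)).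
  rewrite (lsum_ext _ _ (fun i => (f (swapc z i) - f z) + (g (swapc z i) - g z)))
    by (intros; ring).
  rewrite lsum_plus. ring.
Qed.

Lemma gen_scal a f z : gen N rp rm (fun w => a * f w) z = a * gen N rp rm f z.
Proof.
  unfold gen. fold (lsum (seq 0 (2 * N)) (fun i => a * f (swapc z i) - a * f z)).
  fold (lsum (seq 0 (2 * N)) (fun i => f (swapc z i) - f z)).
  rewrite (lsum_ext _ _ (fun i => a * (f (swapc z i) - f z))) by (intros; ring).
  rewrite lsum_scal. ring.
Qed.

Lemma gen_lsum {A} (l : list A) F z :
  gen N rp rm (fun w => lsum l (fun e => F e w)) z = lsum l (fun e => gen N rp rm (F e) z).
Proof.
  induction l as [|a l IH].
  - transitivity (gen N rp rm (fun w => 0 * 0) z).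
    + apply gen_ext_len. intros; unfold lsum; simpl; ring.
    + rewrite gen_scal. unfold lsum; simpl; ring.
  - rewrite lsum_cons, <- IH, <- gen_plus. apply gen_ext_len. intros; reflexivity.
Qed.

Lemma gen_sumf c G m z :
  gen N rp rm (fun w => sum_f_R0 (fun k => c k * G k w) m) z =
  sum_f_R0 (fun k => c k * gen N rp rm (G k) z) m.
Proof.
  induction m as [|m IH]; simpl; [apply gen_scal|].
  rewrite <- IH, <- gen_scal, <- gen_plus. reflexivity.
Qed.

Lemma genM_adjoint (mu f : config -> R) :
  pairing n (genM N rp rm mu) f = pairing n mu (gen N rp rm f).
Proof.
  unfold pairing, genM, sumc. fold n.
  transitivity (lsum (configs n) (fun zeta =>
    lsum (configs n) (fun eta => mu zeta * (f eta * gen N rp rm (indic eta) zeta)))).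
  - rewrite <- lsum_swap. apply lsum_ext. intros eta.
    rewrite Rmult_comm.
    fold (lsum (configs n) (fun zeta => mu zeta * gen N rp rm (indic eta) zeta)).
    rewrite <- lsum_scal. apply lsum_ext. intros; ring.
  - apply lsum_ext_in. intros zeta Hz. rewrite lsum_scal. f_equal.
    rewrite <- (lsum_ext _ (fun e => gen N rp rm (fun w => f e * indic e w) zeta))
      by (intros; apply gen_scal).
    rewrite <- gen_lsum. apply gen_ext_len. intros w Hw.
    apply configs_len in Hz. apply sumc_indic. congruence.
Qed.

Lemma genM_iter_adjoint k (mu f : config -> R) :
  pairing n (Nat.iter k (genM N rp rm) mu) f = pairing n mu (Nat.iter k (gen N rp rm) f).
Proof.
  revert f; induction k as [|k IH]; intros f; [reflexivity|].
  rewrite Nat.iter_succ, genM_adjoint, IH, <- Nat.iter_succ_r. reflexivity.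
Qed.

End Generator.

Lemma Rabs_convex_le a u v M : 0 <= a <= 1 -> Rabs u <= M -> Rabs v <= M ->
  Rabs (a * u + (1 - a) * v) <= M.
Proof.
  intros Ha Hu Hv. eapply Rle_trans; [apply Rabs_triang|].
  rewrite !Rabs_mult, (Rabs_right a), (Rabs_right (1 - a)) by lra.
  assert (a * Rabs u <= a * M) by (apply Rmult_le_compat_l; lra).
  assert ((1 - a) * Rabs v <= (1 - a) * M) by (apply Rmult_le_compat_l; lra).
  lra.
Qed.

Fixpoint bin (n k : nat) : R :=
  match n, k with
  | _, O => 1
  | O, S _ => 0
  | S n', S k' => bin n' k' + bin n' (S k')
  end.

Lemma bin_over n k : (n < k)%nat -> bin n k = 0.
Proof.
  revert k; induction n as [|n IH]; intros k Hk; destruct k; try lia; simpl; auto.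
  rewrite !IH by lia. ring.
Qed.

Lemma bin_fact n k : (k <= n)%nat ->
  bin n k = INR (fact n) / (INR (fact k) * INR (fact (n - k))).
Proof.
  revert k; induction n as [|n IH]; intros k Hk.
  - destruct k; [simpl; field | lia].
  - destruct k as [|k]; simpl bin.
    + rewrite Nat.sub_0_r. simpl (fact 0). simpl (INR 1). field. apply INR_fact_neq_0.
    + destruct (Nat.eq_dec k n) as [->|Hkn].
      * rewrite (bin_over n (S n)), IH, !Nat.sub_diag by lia.
        simpl (fact 0). simpl (INR 1). field. split; apply INR_fact_neq_0.
      * rewrite !IH by lia. simpl (S n - S k)%nat.
        replace (n - k)%nat with (S (n - S k)) by lia.
        change (fact (S n)) with (S n * fact n)%nat.
        change (fact (S k)) with (S k * fact k)%nat.
        change (fact (S (n - S k))) with (S (n - S k) * fact (n - S k))%nat.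
        rewrite !mult_INR, !S_INR, minus_INR, S_INR by lia.
        pose proof (INR_fact_neq_0 n). pose proof (INR_fact_neq_0 k).
        pose proof (INR_fact_neq_0 (n - S k)). pose proof (pos_INR k).
        assert (INR k + 1 <= INR n) by (rewrite <- S_INR; apply le_INR; lia).
        field. repeat split; lra.
Qed.

Lemma sum_shift (f : nat -> R) n : sum_f_R0 f (S n) = f O + sum_f_R0 (fun k => f (S k)) n.
Proof. induction n as [|n IH]; [simpl; ring|]. rewrite tech5, IH. simpl. ring. Qed.

Lemma pascal_sum (b : nat -> R) n :
  sum_f_R0 (fun k => bin n k * b k) n + sum_f_R0 (fun k => bin n k * b (S k)) n =
  sum_f_R0 (fun k => bin (S n) k * b k) (S n).
Proof.
  rewrite (sum_shift (fun k => bin (S n) k * b k)).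
  rewrite (sum_eq (fun k => bin (S n) (S k) * b (S k))
                  (fun k => bin n k * b (S k) + bin n (S k) * b (S k))) by (intros; simpl; ring).
  rewrite sum_plus.
  replace (sum_f_R0 (fun k => bin n k * b k) n) with (sum_f_R0 (fun k => bin n k * b k) (S n))
    by (rewrite tech5, bin_over by lia; ring).
  rewrite sum_shift. destruct n; simpl; ring.
Qed.

(* A uniform bound on the total jump rate from any configuration. *)
Definition qq (N : nat) : R := INR N + 2.

Lemma qq_pos N : 0 < qq N.
Proof. unfold qq. pose proof (pos_INR N). lra. Qed.

Section Uniformization.
Variables (N : nat) (rp rm : R).
Hypotheses (Hrp : 0 <= rp <= 1) (Hrm : 0 <= rm <= 1).
Let n := (2 * N + 1)%nat.

Definition Qop (g : config -> R) : config -> R := fun w => g w + gen N rp rm g w / qq N.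

Lemma Q_expand g w : Qop g w = / qq N *
  (/ 2 * lsum (seq 0 (2 * N)) (fun i => g (swapc w i))
   + (rp * g (setc w (2 * N) true) + (1 - rp) * g (setc w (2 * N) false))
   + (rm * g (setc w 0 true) + (1 - rm) * g (setc w 0 false))).
Proof.
  unfold Qop, gen. fold (lsum (seq 0 (2 * N)) (fun i => g (swapc w i) - g w)).
  rewrite lsum_minus, lsum_const, length_seq, mult_INR.
  pose proof (qq_pos N). unfold qq in *. simpl (INR 2). field. lra.
Qed.

Lemma Q_bound g M : (forall w, Rabs (g w) <= M) -> forall w, Rabs (Qop g w) <= M.
Proof.
  intros H w. pose proof (qq_pos N) as Hq. rewrite Q_expand, Rabs_mult.
  rewrite Rabs_right by (left; apply Rinv_0_lt_compat; auto).
  apply Rmult_le_reg_l with (qq N); auto. rewrite <- Rmult_assoc, Rinv_r, Rmult_1_l by lra.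
  assert (Hs : Rabs (lsum (seq 0 (2 * N)) (fun i => g (swapc w i))) <= INR (2 * N) * M)
    by (rewrite <- (length_seq (2 * N) 0) at 2; apply lsum_abs_bound; auto).
  pose proof (Rabs_convex_le rp _ _ M Hrp (H (setc w (2 * N) true)) (H (setc w (2 * N) false))).
  pose proof (Rabs_convex_le rm _ _ M Hrm (H (setc w 0 true)) (H (setc w 0 false))).
  rewrite mult_INR in Hs. unfold qq. simpl (INR 2) in Hs.
  eapply Rle_trans; [apply Rabs_triang|]. eapply Rle_trans.
  { apply Rplus_le_compat_r. apply Rabs_triang. }
  rewrite Rabs_mult, (Rabs_right (/ 2)) by lra. lra.
Qed.

Lemma iterQ_bound j g M : (forall w, Rabs (g w) <= M) ->
  forall w, Rabs (Nat.iter j Qop g w) <= M.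
Proof. intros H; induction j; simpl; auto. now apply Q_bound. Qed.

(* Since L = qq (Q - I), the generator multiplies sup norms by at most 2 qq. *)
Lemma gen_bound g M : (forall w, Rabs (g w) <= M) -> forall w,
  Rabs (gen N rp rm g w) <= 2 * qq N * M.
Proof.
  intros H w. pose proof (qq_pos N) as Hq.
  replace (gen N rp rm g w) with (qq N * (Qop g w - g w)) by (unfold Qop; field; lra).
  rewrite Rabs_mult, Rabs_right by lra.
  assert (Rabs (Qop g w - g w) <= 2 * M).
  { unfold Rminus. eapply Rle_trans; [apply Rabs_triang|].
    rewrite Rabs_Ropp. pose proof (Q_bound g M H w). pose proof (H w). lra. }
  nra.
Qed.

(* Hence |L^k g| <= (2 qq)^k sup|g|: the exponential series of L converges absolutely. *)
Lemma iter_gen_bound k g M : (forall w, Rabs (g w) <= M) ->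
  forall w, Rabs (Nat.iter k (gen N rp rm) g w) <= (2 * qq N) ^ k * M.
Proof.
  revert g M. induction k as [|k IH]; intros g M H w; [simpl; specialize (H w); lra|].
  rewrite Nat.iter_succ_r. eapply Rle_trans.
  - apply IH with (M := 2 * qq N * M). intros; now apply gen_bound.
  - simpl. lra.
Qed.

Lemma Q_binom m g w : Nat.iter m Qop g w =
  sum_f_R0 (fun k => bin m k * (/ qq N) ^ k * Nat.iter k (gen N rp rm) g w) m.
Proof.
  revert w; induction m as [|m IH]; intros w; [simpl; ring|].
  set (b := fun k => (/ qq N) ^ k * Nat.iter k (gen N rp rm) g w).
  transitivity (sum_f_R0 (fun k => bin m k * b k) m + sum_f_R0 (fun k => bin m k * b (S k)) m).
  - rewrite Nat.iter_succ. unfold Qop. rewrite IH. f_equal.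
    { apply sum_eq. intros; unfold b; ring. }
    rewrite (gen_ext_len N rp rm _ (fun w' => sum_f_R0 (fun k =>
        (bin m k * (/ qq N) ^ k) * Nat.iter k (gen N rp rm) g w') m)) by (intros; apply IH).
    rewrite gen_sumf. unfold Rdiv. rewrite Rmult_comm, scal_sum. apply sum_eq. intros i _.
    unfold b. rewrite Nat.iter_succ.
    change (fun w0 => Nat.iter i (gen N rp rm) g w0) with (Nat.iter i (gen N rp rm) g). simpl. ring.
  - rewrite pascal_sum. apply sum_eq. intros; unfold b; ring.
Qed.

Lemma Q_stationary mst : is_stationary N rp rm mst -> forall j g,
  pairing n mst (Nat.iter j Qop g) = pairing n mst g.
Proof.
  intros [_ Hst] j. induction j as [|j IH]; intros g; [reflexivity|].
  rewrite Nat.iter_succ, <- (IH g). set (h := Nat.iter j Qop g).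
  assert (Z : pairing n mst (gen N rp rm h) = 0).
  { unfold n. rewrite <- genM_adjoint. unfold pairing, sumc.
    fold (lsum (configs (2 * N + 1)) (fun z => genM N rp rm mst z * h z)).
    rewrite (lsum_ext_in _ _ (fun _ => 0)), lsum_const by (intros e He; rewrite Hst; auto; ring).
    ring. }
  unfold pairing, sumc, Qop in *.
  fold (lsum (configs n) (fun z => mst z * (h z + gen N rp rm h z / qq N))).
  fold (lsum (configs n) (fun z => mst z * h z)).
  fold (lsum (configs n) (fun z => mst z * gen N rp rm h z)) in Z.
  rewrite (lsum_ext _ _ (fun z => mst z * h z + / qq N * (mst z * gen N rp rm h z)))
    by (intros; unfold Rdiv; ring).
  rewrite lsum_plus, lsum_scal, Z. ring.
Qed.

End Uniformization.

Lemma pairing_diff_bound N (mu mst X : config -> R) X0 U :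
  is_prob N mu -> is_prob N mst ->
  (forall z, In z (configs (2 * N + 1)) -> Rabs (X z - X0) <= U) ->
  pairing (2 * N + 1) mu X - pairing (2 * N + 1) mst X <= 2 * U.
Proof.
  intros [Hmu0 Hmu1] [Hmst0 Hmst1] HX. unfold pairing. rewrite !sumc_lsum in *.
  set (l := configs (2 * N + 1)) in *.
  transitivity (lsum l (fun z => (mu z - mst z) * (X z - X0))).
  - right. rewrite (lsum_ext l (fun z => (mu z - mst z) * (X z - X0))
      (fun z => (mu z * X z - mst z * X z) - X0 * (mu z - mst z))) by (intros; ring).
    rewrite !lsum_minus, lsum_scal, lsum_minus, Hmu1, Hmst1. ring.
  - transitivity (lsum l (fun z => U * (mu z + mst z))).
    + apply lsum_le. intros z Hz.
      pose proof (HX z Hz). pose proof (Hmu0 z Hz). pose proof (Hmst0 z Hz).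
      pose proof (Rle_abs (X z - X0)). pose proof (Rle_abs (- (X z - X0))).
      rewrite Rabs_Ropp in *. nra.
    + rewrite lsum_scal, lsum_plus, Hmu1, Hmst1. lra.
Qed.

Lemma tau_sum (F : nat -> R) m x :
  lsum (seq 0 m) (fun i => F (tau i x) - F x) =
  (if ((1 <=? x) && (x <=? m))%nat then F (x - 1)%nat - F x else 0) +
  (if (x <? m)%nat then F (S x) - F x else 0).
Proof.
  induction m as [|m IH].
  - unfold lsum. destruct x; simpl; lra.
  - rewrite seq_S, lsum_app, IH, lsum_cons, lsum_nil. simpl (0 + m)%nat. unfold tau.
    index_cases; simpl; rewrite ?Nat.sub_0_r; lra.
Qed.

Section Coupling.
Variables (N : nat) (rp rm : R).
Hypotheses (Hrp : 0 <= rp <= 1) (Hrm : 0 <= rm <= 1).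
Let n := (2 * N + 1)%nat.

Definition Lip (d : nat -> R) (g : config -> R) : Prop :=
  forall z, length z = n -> forall x, (x < n)%nat ->
  Rabs (g (setc z x true) - g (setc z x false)) <= d x.

(* The dual action of Q on Lipschitz profiles, from the basic coupling of the dynamics:
   a discrepancy at x is moved by exchanges and erased by the reservoir at its site. *)
Definition Kop (d : nat -> R) : nat -> R := fun x =>
  / qq N * (/ 2 * lsum (seq 0 (2 * N)) (fun i => d (tau i x))
            + (if (x =? 2 * N)%nat then 0 else d x) + (if (x =? 0)%nat then 0 else d x)).

Lemma reset_bound d g z x y c : Lip d g -> length z = n -> (x < n)%nat -> (y < n)%nat ->
  Rabs (g (setc (setc z x true) y c) - g (setc (setc z x false) y c))
  <= (if (x =? y)%nat then 0 else d x).
Proof.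
  intros HL Hz Hx Hy. destruct (Nat.eqb_spec x y) as [<-|Hxy].
  - rewrite !set_set_same. unfold Rminus. rewrite Rplus_opp_r, Rabs_R0. lra.
  - rewrite !(set_set_comm z x y) by auto. apply HL; auto. now rewrite len_setc.
Qed.

Lemma Lip_Q d g : Lip d g -> Lip (Kop d) (Qop N rp rm g).
Proof.
  intros HL z Hz x Hx. rewrite !Q_expand. unfold Kop.
  pose proof (qq_pos N) as Hq.
  set (a := setc z x true). set (b := setc z x false).
  match goal with |- Rabs (?A - ?B) <= _ => replace (A - B) with
    (/ qq N * (/ 2 * lsum (seq 0 (2 * N)) (fun i => g (swapc a i) - g (swapc b i))
     + (rp * (g (setc a (2 * N) true) - g (setc b (2 * N) true))
        + (1 - rp) * (g (setc a (2 * N) false) - g (setc b (2 * N) false)))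
     + (rm * (g (setc a 0 true) - g (setc b 0 true))
        + (1 - rm) * (g (setc a 0 false) - g (setc b 0 false)))))
    by (rewrite lsum_minus; ring) end.
  rewrite Rabs_mult, (Rabs_right (/ qq N)) by (left; apply Rinv_0_lt_compat; auto).
  apply Rmult_le_compat_l; [left; apply Rinv_0_lt_compat; auto|].
  assert (Hexch : Rabs (lsum (seq 0 (2 * N)) (fun i => g (swapc a i) - g (swapc b i)))
                  <= lsum (seq 0 (2 * N)) (fun i => d (tau i x))).
  { eapply Rle_trans; [apply lsum_abs|]. apply lsum_le. intros i Hi. apply in_seq in Hi.
    unfold a, b. rewrite !swap_set by (unfold n in Hz; lia).
    apply HL; [now rewrite len_swapc | apply tau_lt; unfold n in *; lia]. }
  assert (Hright : Rabs (rp * (g (setc a (2 * N) true) - g (setc b (2 * N) true))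
                      + (1 - rp) * (g (setc a (2 * N) false) - g (setc b (2 * N) false)))
                   <= (if (x =? 2 * N)%nat then 0 else d x))
    by (apply Rabs_convex_le; auto; apply reset_bound; unfold n in *; auto; lia).
  assert (Hleft : Rabs (rm * (g (setc a 0 true) - g (setc b 0 true))
                      + (1 - rm) * (g (setc a 0 false) - g (setc b 0 false)))
                  <= (if (x =? 0)%nat then 0 else d x))
    by (apply Rabs_convex_le; auto; apply reset_bound; unfold n in *; auto; lia).
  eapply Rle_trans; [apply Rabs_triang|].
  eapply Rle_trans; [apply Rplus_le_compat_r, Rabs_triang|].
  rewrite Rabs_mult, (Rabs_right (/ 2)) by lra. lra.
Qed.

Lemma Lip_iter (s : config -> R) d j : Lip d s ->
  Lip (Nat.iter j Kop d) (Nat.iter j (Qop N rp rm) s).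
Proof. intros H; induction j; simpl; auto. now apply Lip_Q. Qed.

Lemma Kop_mono d d' x : (forall y, (y < n)%nat -> d y <= d' y) -> (x < n)%nat ->
  Kop d x <= Kop d' x.
Proof.
  intros H Hx. unfold Kop. pose proof (qq_pos N).
  apply Rmult_le_compat_l; [left; apply Rinv_0_lt_compat; auto|].
  assert (lsum (seq 0 (2 * N)) (fun i => d (tau i x))
          <= lsum (seq 0 (2 * N)) (fun i => d' (tau i x))).
  { apply lsum_le. intros i Hi. apply in_seq in Hi. apply H, tau_lt; unfold n in *; lia. }
  pose proof (H x Hx). destruct (x =? 2 * N)%nat, (x =? 0)%nat; lra.
Qed.

Lemma Kop_scal c d x : Kop (fun y => c * d y) x = c * Kop d x.
Proof. unfold Kop. rewrite lsum_scal. destruct (x =? 2 * N)%nat, (x =? 0)%nat; ring. Qed.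

End Coupling.

Section Lyapunov.
Variable N : nat.
Let n := (2 * N + 1)%nat.

(* A concave Lyapunov profile on the sites 0..2N, vanishing just outside them. *)
Definition hh (x : nat) : R := (INR x + 1) * (2 * INR N + 1 - INR x).
Definition Hmax : R := (INR N + 1) ^ 2.

Lemma hh_bounds x : (x < n)%nat -> 1 <= hh x <= Hmax.
Proof.
  intros Hx. unfold hh, Hmax, n in *.
  assert (INR x <= 2 * INR N) by (rewrite <- (mult_INR 2); apply le_INR; lia).
  pose proof (pos_INR x). split.
  - assert (0 <= INR x * (2 * INR N - INR x)) by (apply Rmult_le_pos; lra). nra.
  - pose proof (Rle_0_sqr (INR N - INR x)). unfold Rsqr in *. nra.
Qed.

Hypothesis HN : (1 <= N)%nat.

(* The discrete Laplacian of hh is -2, so one step of Kop lowers hh by 1 / qq. *)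
Lemma K_h x : (x < n)%nat -> Kop N hh x <= hh x - / qq N.
Proof.
  intros Hx. pose proof (qq_pos N) as Hq. unfold Kop.
  apply Rmult_le_reg_l with (qq N); auto.
  replace (qq N * (hh x - / qq N)) with (qq N * hh x - 1) by (field; lra).
  rewrite <- Rmult_assoc, Rinv_r, Rmult_1_l by lra.
  replace (lsum (seq 0 (2 * N)) (fun i => hh (tau i x))) with
    (lsum (seq 0 (2 * N)) (fun i => hh (tau i x) - hh x) + INR (2 * N) * hh x)
    by (rewrite lsum_minus, lsum_const, length_seq; ring).
  rewrite tau_sum. unfold n in Hx. unfold qq, hh.
  index_cases; cbn [andb]; rewrite ?minus_INR, ?mult_INR, ?S_INR by lia;
    apply le_INR in HN; simpl INR in *; nra.
Qed.

Definition theta : R := 1 - / (qq N * Hmax).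

Lemma theta_pos : 0 <= theta.
Proof.
  unfold theta, qq, Hmax. pose proof (pos_INR N).
  assert (1 <= (INR N + 2) * (INR N + 1) ^ 2) by nra.
  assert (/ ((INR N + 2) * (INR N + 1) ^ 2) <= 1)
    by (rewrite <- Rinv_1; apply Rinv_le_contravar; lra).
  lra.
Qed.

(* Since hh <= Hmax, the decrement 1/qq is at least a fraction 1 - theta of hh. *)
Lemma K_h_theta x : (x < n)%nat -> Kop N hh x <= theta * hh x.
Proof.
  intros Hx. eapply Rle_trans; [now apply K_h|].
  pose proof (hh_bounds x Hx). pose proof (qq_pos N).
  assert (hh x * / (qq N * Hmax) <= / qq N).
  { rewrite Rinv_mult. replace (/ qq N) with (Hmax * (/ qq N * / Hmax)) at 2 by (field; lra).
    apply Rmult_le_compat_r; [|lra].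
    apply Rmult_le_pos; left; apply Rinv_0_lt_compat; lra. }
  unfold theta. nra.
Qed.

Lemma Kit_bound j x : (x < n)%nat ->
  Nat.iter j (Kop N) (fun _ => 2) x <= 2 * theta ^ j * hh x.
Proof.
  revert x; induction j as [|j IH]; intros x Hx.
  - simpl. pose proof (hh_bounds x Hx). lra.
  - rewrite Nat.iter_succ. eapply Rle_trans.
    { apply Kop_mono with (d' := fun y => (2 * theta ^ j) * hh y); auto. }
    rewrite Kop_scal. pose proof (pow_le theta j theta_pos).
    eapply Rle_trans; [apply Rmult_le_compat_l; [lra | now apply K_h_theta]|].
    simpl. lra.
Qed.

End Lyapunov.

Definition zj (z : config) (j : nat) : config :=
  map (fun i => if (i <? j)%nat then false else get z i) (seq 0 (length z)).

Lemma len_zj z j : length (zj z j) = length z.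
Proof. unfold zj. now rewrite length_map, length_seq. Qed.

Lemma get_zj z j i : get (zj z j) i =
  if (i <? length z)%nat then (if (i <? j)%nat then false else get z i) else false.
Proof. apply nth_map_seq. Qed.

Lemma zj_0 z : zj z 0 = z.
Proof.
  apply config_ext; [apply len_zj|]. intros i Hi. rewrite len_zj in Hi.
  rewrite get_zj. index_cases. reflexivity.
Qed.

Lemma zj_full z : zj z (length z) = repeat false (length z).
Proof.
  apply config_ext; [now rewrite len_zj, repeat_length|]. intros i Hi. rewrite len_zj in Hi.
  rewrite get_zj. unfold get. rewrite nth_repeat. index_cases; reflexivity.
Qed.

Lemma zj_S z j : (j < length z)%nat -> zj z (S j) = setc (zj z j) j false.
Proof.
  intros Hj. apply config_ext; [now rewrite len_setc, !len_zj|].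
  intros i Hi. rewrite len_zj in Hi. rewrite get_setc, len_zj, !get_zj. index_cases; auto.
Qed.

(* Emptying the sites one at a time: a d-Lipschitz function oscillates by at most
   sum_x d x around its value at the empty configuration. *)
Lemma path_bound N d g z : Lip N d g -> length z = (2 * N + 1)%nat ->
  Rabs (g z - g (repeat false (2 * N + 1))) <= lsum (seq 0 (2 * N + 1)) d.
Proof.
  intros HL Hz.
  assert (Hj : forall j, (j <= 2 * N + 1)%nat ->
    Rabs (g z - g (zj z j)) <= lsum (seq 0 j) d).
  { induction j as [|j IH]; intros Hj.
    - rewrite zj_0. unfold Rminus. rewrite Rplus_opp_r, Rabs_R0. simpl. rewrite lsum_nil. lra.
    - rewrite seq_S, lsum_app, lsum_cons. simpl (0 + j)%nat.
      assert (Hstep : Rabs (g (zj z j) - g (zj z (S j))) <= d j).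
      { rewrite zj_S by lia. set (w := zj z j).
        assert (Hw : length w = (2 * N + 1)%nat) by (unfold w; now rewrite len_zj).
        pose proof (HL w Hw j ltac:(lia)) as Hd.
        rewrite <- (set_get w j) at 1 by lia.
        destruct (get w j); auto. unfold Rminus. rewrite Rplus_opp_r, Rabs_R0.
        eapply Rle_trans; [apply Rabs_pos | apply Hd]. }
      pose proof (IH ltac:(lia)).
      replace (g z - g (zj z (S j))) with
        ((g z - g (zj z j)) + (g (zj z j) - g (zj z (S j)))) by ring.
      eapply Rle_trans; [apply Rabs_triang|]. rewrite lsum_nil. lra. }
  rewrite <- Hz, <- zj_full, Hz. apply Hj. lia.
Qed.

(* Exponential loss of memory of the uniformized chain, seen through a test function
   bounded by 1: the coupling bound combined with the Lyapunov profile hh. *)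
Lemma Q_decay N rp rm (mu mst s : config -> R) m :
  0 <= rp <= 1 -> 0 <= rm <= 1 -> (1 <= N)%nat ->
  is_prob N mu -> is_prob N mst -> (forall w, Rabs (s w) <= 1) ->
  pairing (2 * N + 1) mu (Nat.iter m (Qop N rp rm) s)
  - pairing (2 * N + 1) mst (Nat.iter m (Qop N rp rm) s)
  <= 4 * INR (2 * N + 1) * Hmax N * theta N ^ m.
Proof.
  intros Hrp Hrm HN Hmu Hmst Hs.
  set (X := Nat.iter m (Qop N rp rm) s).
  set (U := INR (2 * N + 1) * (2 * theta N ^ m * Hmax N)).
  replace (4 * INR (2 * N + 1) * Hmax N * theta N ^ m) with (2 * U) by (unfold U; ring).
  apply pairing_diff_bound with (X0 := X (repeat false (2 * N + 1))); auto.
  intros z Hz. apply configs_len in Hz.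
  eapply Rle_trans; [apply path_bound with (d := Nat.iter m (Kop N) (fun _ => 2)); auto|].
  - apply Lip_iter; auto. intros w _ x _. unfold Rminus.
    eapply Rle_trans; [apply Rabs_triang|]. rewrite Rabs_Ropp.
    pose proof (Hs (setc w x true)); pose proof (Hs (setc w x false)); lra.
  - unfold U. rewrite <- (length_seq (2 * N + 1) 0) at 2. rewrite <- lsum_const.
    apply lsum_le. intros x Hx. apply in_seq in Hx.
    eapply Rle_trans; [apply Kit_bound; auto; lia|].
    pose proof (hh_bounds N x ltac:(lia)). pose proof (pow_le _ m (theta_pos N)). nra.
Qed.

Lemma ser_exp x : is_series (fun k => x ^ k / INR (fact k)) (exp x).
Proof.
  eapply is_series_ext; [|exact (is_exp_Reals x)]. intros k. simpl.
  rewrite pow_n_pow. unfold scal; simpl. unfold mult; simpl. unfold Rdiv. ring.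
Qed.

Lemma ser_zero : is_series (fun _ => 0) 0.
Proof.
  pose proof (is_series_scal_r 0 _ _ (ser_exp 0)) as H. rewrite Rmult_0_r in H.
  eapply is_series_ext; [|exact H]. intros; simpl; ring.
Qed.

Lemma ser_scal c a A : is_series a A -> is_series (fun k => c * a k) (c * A).
Proof. intros; now apply (is_series_scal c a A). Qed.

Lemma ser_minus a b A B : is_series a A -> is_series b B ->
  is_series (fun k => a k - b k) (A - B).
Proof. intros; now apply (is_series_minus a b A B). Qed.

Lemma ser_list {A} (l : list A) (a : A -> nat -> R) (L : A -> R) :
  (forall e, In e l -> is_series (a e) (L e)) ->
  is_series (fun k => lsum l (fun e => a e k)) (lsum l L).
Proof.
  induction l as [|e l IH]; intros H; [apply ser_zero|].
  rewrite lsum_cons. eapply is_series_ext; [|apply (is_series_plus (a e))].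
  - intros k. now rewrite lsum_cons.
  - apply H. now left.
  - apply IH. intros; apply H; now right.
Qed.

Lemma ser_le a b A B : (forall k, a k <= b k) -> is_series a A -> is_series b B -> A <= B.
Proof.
  intros H Ha Hb. apply is_series_Reals in Ha, Hb.
  apply Rle_cv_lim with (fun n => sum_f_R0 a n) (fun n => sum_f_R0 b n); auto.
  intros; apply sum_Rle; auto.
Qed.

Lemma pairing_abs_bound N (mu g : config -> R) M : is_prob N mu ->
  (forall w, Rabs (g w) <= M) -> Rabs (pairing (2 * N + 1) mu g) <= M.
Proof.
  intros [Hmu0 Hmu1] Hg. unfold pairing. rewrite sumc_lsum in *.
  eapply Rle_trans; [apply lsum_abs|].
  eapply Rle_trans; [apply lsum_le with (g := fun z => M * mu z)|].
  - intros z Hz. rewrite Rabs_mult, (Rabs_right (mu z)) by (apply Rle_ge; auto).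
    pose proof (Hg z). pose proof (Hmu0 z Hz). nra.
  - rewrite lsum_scal, Hmu1. lra.
Qed.

(* By duality, the law at time t pairs with f as the series sum_k t^k/k! <mu, L^k f>. *)
Lemma law_series N rp rm (mu nu f : config -> R) t : is_law_at N rp rm mu t nu ->
  is_series (fun k => t ^ k / INR (fact k) * pairing (2 * N + 1) mu (Nat.iter k (gen N rp rm) f))
    (pairing (2 * N + 1) nu f).
Proof.
  intros Hlaw. unfold pairing at 2. rewrite sumc_lsum.
  eapply is_series_ext; [|apply (ser_list _ (fun eta k =>
    f eta * (t ^ k / INR (fact k) * Nat.iter k (genM N rp rm) mu eta)))].
  - intros k. simpl.
    rewrite (lsum_ext _ _ (fun eta => t ^ k / INR (fact k) *
      (Nat.iter k (genM N rp rm) mu eta * f eta))) by (intros; ring).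
    rewrite lsum_scal, <- sumc_lsum. f_equal. apply genM_iter_adjoint.
  - intros eta Heta. rewrite (Rmult_comm (nu eta)).
    apply ser_scal. apply is_series_Reals. now apply Hlaw.
Qed.

(* The Cauchy product of exp(t L) with exp(qq t) is the Poisson mixture of powers of Q. *)
Lemma cauchy_term N rp rm (mu f : config -> R) t m :
  sum_f_R0 (fun k => t ^ k / INR (fact k) * pairing (2 * N + 1) mu (Nat.iter k (gen N rp rm) f)
                     * ((qq N * t) ^ (m - k) / INR (fact (m - k)))) m
  = (qq N * t) ^ m / INR (fact m) * pairing (2 * N + 1) mu (Nat.iter m (Qop N rp rm) f).
Proof.
  set (q := qq N). assert (Hq : 0 < q) by apply qq_pos.
  unfold pairing at 2. rewrite sumc_lsum.
  rewrite (lsum_ext _ _ (fun z => sum_f_R0 (fun k =>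
    bin m k * (/ q) ^ k * (mu z * Nat.iter k (gen N rp rm) f z)) m)).
  2: { intros z. rewrite Q_binom, scal_sum. apply sum_eq. intros; unfold q; ring. }
  rewrite lsum_sumf, scal_sum. apply sum_eq. intros k Hk.
  rewrite lsum_scal, <- sumc_lsum, bin_fact by auto.
  fold (pairing (2 * N + 1) mu (Nat.iter k (gen N rp rm) f)).
  pose proof (INR_fact_neq_0 k). pose proof (INR_fact_neq_0 (m - k)).
  pose proof (INR_fact_neq_0 m). pose proof (pow_nonzero q k ltac:(lra)).
  replace ((q * t) ^ m) with ((q * t) ^ k * (q * t) ^ (m - k))
    by (rewrite <- pow_add; f_equal; lia).
  rewrite !Rpow_mult_distr, pow_inv. field. repeat split; auto.
Qed.

Lemma uniformized_series N rp rm (mu nu f : config -> R) t M :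
  0 <= rp <= 1 -> 0 <= rm <= 1 -> 0 <= t ->
  is_prob N mu -> is_law_at N rp rm mu t nu -> (forall w, Rabs (f w) <= M) ->
  is_series (fun m => (qq N * t) ^ m / INR (fact m)
                      * pairing (2 * N + 1) mu (Nat.iter m (Qop N rp rm) f))
    (pairing (2 * N + 1) nu f * exp (qq N * t)).
Proof.
  intros Hrp Hrm Ht Hmu Hlaw Hf. pose proof (qq_pos N) as Hq.
  set (F := fun k => pairing (2 * N + 1) mu (Nat.iter k (gen N rp rm) f)).
  assert (Hfact : forall x k, 0 <= x -> 0 <= x ^ k / INR (fact k)).
  { intros x k Hx. unfold Rdiv. apply Rmult_le_pos; [now apply pow_le|].
    left; apply Rinv_0_lt_compat, lt_0_INR, lt_O_fact. }
  assert (HabsF : ex_series (fun k => Rabs (t ^ k / INR (fact k) * F k))).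
  { apply (@ex_series_le R_AbsRing R_CompleteNormedModule _
             (fun k => M * ((2 * qq N * t) ^ k / INR (fact k)))).
    - intros k. unfold norm; simpl. unfold abs; simpl.
      rewrite Rabs_Rabsolu, Rabs_mult, (Rabs_right (t ^ k / _)) by (apply Rle_ge; auto).
      assert (Rabs (F k) <= (2 * qq N) ^ k * M)
        by (apply pairing_abs_bound; auto; now apply iter_gen_bound).
      rewrite Rpow_mult_distr. pose proof (Hfact t k Ht). unfold Rdiv in *. nra.
    - eexists. apply ser_scal, ser_exp. }
  assert (Habsexp : ex_series (fun m => Rabs ((qq N * t) ^ m / INR (fact m)))).
  { eexists. eapply is_series_ext; [|apply ser_exp]. intros m. simpl.
    symmetry. apply Rabs_right, Rle_ge, Hfact. nra. }
  eapply is_series_ext;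
    [|exact (is_series_mult _ _ _ _ (law_series N rp rm mu nu f t Hlaw) (ser_exp (qq N * t))
                              HabsF Habsexp)].
  intros m. apply cauchy_term.
Qed.

(* Subtracting the Q-invariant pairing with mst: e^(qq t) (<nu, s> - <mst, s>) is the
   Poisson(qq t) mixture of the discrepancies <mu, Q^m s> - <mst, Q^m s>. *)
Lemma discrepancy_series N rp rm (mu nu mst s : config -> R) t :
  0 <= rp <= 1 -> 0 <= rm <= 1 -> 0 <= t ->
  is_prob N mu -> is_law_at N rp rm mu t nu -> is_stationary N rp rm mst ->
  (forall w, Rabs (s w) <= 1) ->
  is_series (fun m => (qq N * t) ^ m / INR (fact m) *
      (pairing (2 * N + 1) mu (Nat.iter m (Qop N rp rm) s)
       - pairing (2 * N + 1) mst (Nat.iter m (Qop N rp rm) s)))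
    ((pairing (2 * N + 1) nu s - pairing (2 * N + 1) mst s) * exp (qq N * t)).
Proof.
  intros Hrp Hrm Ht Hmu Hlaw Hst Hs.
  pose proof (uniformized_series N rp rm mu nu s t 1 Hrp Hrm Ht Hmu Hlaw Hs) as Hmix.
  pose proof (is_series_scal_r (pairing (2 * N + 1) mst s) _ _ (ser_exp (qq N * t))) as Hexp.
  replace ((pairing (2 * N + 1) nu s - pairing (2 * N + 1) mst s) * exp (qq N * t)) with
    (pairing (2 * N + 1) nu s * exp (qq N * t) - exp (qq N * t) * pairing (2 * N + 1) mst s)
    by ring.
  eapply is_series_ext; [|apply (ser_minus _ _ _ _ Hmix Hexp)].
  intros m. rewrite (Q_stationary N rp rm mst Hst).
  symmetry; apply Rmult_minus_distr_l.
Qed.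

Lemma series_decay x (g : nat -> R) D C theta : 0 <= x ->
  is_series (fun m => x ^ m / INR (fact m) * g m) (D * exp x) ->
  (forall m, g m <= C * theta ^ m) -> D <= C * exp (- (1 - theta) * x).
Proof.
  intros Hx Hser Hg.
  assert (Hcmp : D * exp x <= C * exp (theta * x)).
  { eapply ser_le; [|exact Hser|apply ser_scal, ser_exp]. intros m. simpl.
    rewrite Rpow_mult_distr. unfold Rdiv.
    assert (0 <= x ^ m * / INR (fact m)).
    { apply Rmult_le_pos; [now apply pow_le|].
      left; apply Rinv_0_lt_compat, lt_0_INR, lt_O_fact. }
    pose proof (Hg m). nra. }
  replace (- (1 - theta) * x) with (theta * x + - x) by ring.
  rewrite exp_plus, exp_Ropp. pose proof (exp_pos x).
  apply Rmult_le_reg_r with (exp x); auto.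
  replace (C * (exp (theta * x) * / exp x) * exp x) with (C * exp (theta * x)) by (field; lra).
  exact Hcmp.
Qed.

(* The total variation distance is the pairing with the sign of the difference. *)
Definition sign_of (lam : config -> R) : config -> R :=
  fun eta => if Rle_dec 0 (lam eta) then 1 else -1.

Lemma sign_of_bound lam w : Rabs (sign_of lam w) <= 1.
Proof.
  unfold sign_of. destruct Rle_dec; [rewrite Rabs_R1 | rewrite Rabs_left]; lra.
Qed.

Lemma tvnorm_sign N (nu mst : config -> R) :
  tvnorm N (fun eta => nu eta - mst eta) =
  pairing (2 * N + 1) nu (sign_of (fun eta => nu eta - mst eta))
  - pairing (2 * N + 1) mst (sign_of (fun eta => nu eta - mst eta)).
Proof.
  unfold tvnorm, pairing. rewrite !sumc_lsum, <- lsum_minus. apply lsum_ext. intros eta.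
  unfold sign_of. destruct Rle_dec.
  - rewrite Rabs_right by lra. ring.
  - rewrite Rabs_left by lra. ring.
Qed.

Lemma decay_simplify (M t D : R) : 1 <= M -> 0 < t -> D <= 2 ->
  D <= 4 * (2 * M + 1) * (M + 1) ^ 2 * exp (- t / (M + 1) ^ 2) ->
  D <= 8 * M * exp (- / 12 * t / M ^ 2).
Proof.
  intros HM Ht H1 H2.
  set (u := exp (- / 12 * t / M ^ 2)).
  assert (Hu : 0 < u) by apply exp_pos.
  assert (Hcube : exp (- t / (M + 1) ^ 2) <= u ^ 3).
  { unfold u. replace (exp (- / 12 * t / M ^ 2) ^ 3) with (exp (3 * (- / 12 * t / M ^ 2)))
      by (replace (3 * _) with (- / 12 * t / M ^ 2 + (- / 12 * t / M ^ 2 + - / 12 * t / M ^ 2))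
            by ring; rewrite !exp_plus; ring).
    assert (Hle : - t / (M + 1) ^ 2 <= 3 * (- / 12 * t / M ^ 2)).
    { assert (t / (4 * M ^ 2) <= t / (M + 1) ^ 2).
      { unfold Rdiv. apply Rmult_le_compat_l; [lra|]. apply Rinv_le_contravar; nra. }
      replace (3 * (- / 12 * t / M ^ 2)) with (- (t / (4 * M ^ 2))) by (field; lra).
      unfold Rdiv in *. lra. }
    destruct (Rle_lt_or_eq_dec _ _ Hle) as [Hlt | ->]; [left; now apply exp_increasing | lra]. }
  assert (4 * (2 * M + 1) * (M + 1) ^ 2 <= 48 * M ^ 3) by nra.
  assert (D <= 48 * M ^ 3 * u ^ 3).
  { eapply Rle_trans; [apply H2|]. pose proof (exp_pos (- t / (M + 1) ^ 2)).
    apply Rmult_le_compat; nra. }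
  destruct (Rle_dec 2 (8 * M * u)); [lra|].
  assert (M * u < 1 / 4) by lra. assert (0 < M * u) by nra.
  assert ((M * u) * (M * u) < 1 / 16) by nra.
  assert (48 * M ^ 3 * u ^ 3 = 48 * (M * u) * ((M * u) * (M * u))) by ring.
  nra.
Qed.

Theorem theorem2p1 (rp rm : R) (Hp : rp <= 1) (Hpm : rm < rp) (Hm : 0 <= rm) :
  exists c b : R, 0 < b /\
    forall (N : nat), (1 <= N)%nat ->
    forall (mu : config -> R), is_prob N mu ->
    forall (t : R), 0 < t ->
    forall (nu mst : config -> R),
      is_law_at N rp rm mu t nu ->
      is_stationary N rp rm mst ->
      tvnorm N (fun eta => nu eta - mst eta) <= c * INR N * exp (- b * t / (INR N ^ 2)).
Proof.
  exists 8, (/ 12). split; [lra|].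
  intros N HN mu Hmu t Ht nu mst Hlaw Hst.
  assert (Hrp : 0 <= rp <= 1) by lra. assert (Hrm : 0 <= rm <= 1) by lra.
  set (s := sign_of (fun eta => nu eta - mst eta)).
  set (D := pairing (2 * N + 1) nu s - pairing (2 * N + 1) mst s).
  set (x := qq N * t). assert (Hx : 0 <= x) by (pose proof (qq_pos N); unfold x; nra).
  pose proof (discrepancy_series N rp rm mu nu mst s t Hrp Hrm ltac:(lra) Hmu Hlaw Hst
                (sign_of_bound _)) as Hser. fold x D in Hser.
  (* Every discrepancy is at most 2, since Q^m s stays bounded by 1. *)
  assert (Hcoarse : D <= 2).
  { replace 2 with (2 * exp (- (1 - 1) * x)) by (rewrite Rminus_diag, Ropp_0,
      Rmult_0_l, exp_0; ring).
    apply (series_decay _ _ _ _ _ Hx Hser). intros m. rewrite pow1, Rmult_1_r.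
    replace 2 with (2 * 1) by ring. apply pairing_diff_bound with (X0 := 0); auto.
    - now destruct Hst.
    - intros z _. rewrite Rminus_0_r. apply iterQ_bound; auto. apply sign_of_bound. }
  (* The coupling makes the m-th discrepancy O(N^3 theta^m). *)
  assert (Hfine : D <= 4 * INR (2 * N + 1) * Hmax N * exp (- t / Hmax N)).
  { replace (- t / Hmax N) with (- (1 - theta N) * x).
    - apply (series_decay _ _ _ _ _ Hx Hser). intros m.
      apply Q_decay; auto; [now destruct Hst | apply sign_of_bound].
    - unfold theta, x, Hmax. pose proof (qq_pos N). pose proof (pos_INR N). field. nra. }
  rewrite tvnorm_sign. fold s D. apply decay_simplify; auto.
  - now apply (le_INR 1).
  - unfold Hmax in Hfine. rewrite plus_INR, mult_INR in Hfine. simpl (INR 1) in Hfine.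
    simpl (INR 2) in Hfine. replace (1 + 1) with 2 in Hfine by ring. exact Hfine.
Qed.
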